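(* There exist absolute constants $C,c>0$ such that the following holds. Let $q$ be a prime power, $B$ a non-degenerate bilinear form on $\mathbb{F}_q^2$, and $\mathcal{A},\mathcal{B},\mathcal{C}\subseteq\mathbb{F}_q^2$ with $|\mathcal{A}|,|\mathcal{B}|,|\mathcal{C}|\ge Cq^{3/2}$. Then the number of triples $(\lambda_1,\lambda_2,\lambda_3)\in(\mathbb{F}_q^* )^3$ for which the system \[ B(\mathbf{a},\mathbf{b})=\lambda_1,\quad B(\mathbf{a},\mathbf{c})=\lambda_2,\quad B(\mathbf{b},\mathbf{c})=\lambda_3,\qquad \mathbf{a}\in\mathcal{A},\ \mathbf{b}\in\mathcal{B},\ \mathbf{c}\in\mathcal{C}, \] has a solution is at least $c\,\frac{\sqrt{|\mathcal{B}||\mathcal{C}|}}{q^2}\,q^3$.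
   Context: $B:\mathbb{F}_q^2\times\mathbb{F}_q^2\to\mathbb{F}_q$ is bilinear and non-degenerate; $\mathbb{F}_q^*=\mathbb{F}_q\setminus\{0\}$. *)

From HB Require Import structures.
From mathcomp Require Import all_boot all_order all_algebra all_field.
Set Implicit Arguments. Unset Strict Implicit. Unset Printing Implicit Defensive.
Import Order.TTheory GRing.Theory Num.Theory.
Local Open Scope ring_scope.

(* Every bilinear form on F^2 is x, y |-> x M y^T for a unique 2x2 matrix M;
   it is non-degenerate iff M is invertible. *)
Definition bilform (F : fieldType) (M : 'M[F]_2) (x y : 'rV[F]_2) : F :=
  (x *m M *m y^T) 0 0.

Definition bilform_nondeg (F : fieldType) (M : 'M[F]_2) : bool := M \in unitmx.

Definition solvable_triples (F : finFieldType) (M : 'M[F]_2)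
  (A B C : {set 'rV[F]_2}) : {set F * F * F} :=
  [set l : F * F * F | [&& l.1.1 != 0, l.1.2 != 0, l.2 != 0 &
     [exists a in A, exists b in B, exists c in C,
        [&& bilform M a b == l.1.1, bilform M a c == l.1.2 &
            bilform M b c == l.2]]]].

From HB Require Import structures.
From mathcomp Require Import all_boot all_order all_algebra all_field.
From mathcomp Require Import ring lra zify.
Set Implicit Arguments. Unset Strict Implicit. Unset Printing Implicit Defensive.
Import Order.TTheory GRing.Theory Num.Theory.
Local Open Scope ring_scope.

(* Write B(x, y) = <x M, y> where <g, y> is the standard dot product on F^2.
   Call a value t != 0 of B on X x Y "non-degenerate" if it is attained by a
   pair (x, y) whose dual vectors x M and y N are linearly independent (N = M
   for B(x, y), N = M^T when we read B(y, x) as a function of y).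

   1. Plane geometry: a line has at most q points and two non-parallel lines
      meet in at most one point.
   2. Energy argument: the number nu(t) of pairs (x, y) in X x Y with
      B(x, y) = t has variance sum_t (q nu(t) - |X||Y|)^2 <= q^4 |X||Y|,
      while a degenerate value t != 0 has nu(t) <= |X|; hence when
      |X||Y| >= 16 q^3 and |Y| >= 2q at least q/2 values are non-degenerate.
   3. Each non-degenerate value t = B(a, b) extends to at least |C| - 2q
      distinct solvable triples (t, B(a, c), B(b, c)), c in C: so
      q |C| <= 4 T, and symmetrically (using the value B(a, c)) q |B| <= 4 T,
      where T is the number of solvable triples.  Multiplying gives
      q^2 |B| |C| <= 16 T^2, which is the claim. *)

Section Plane.
Variable F : fieldType.
Implicit Types (g h u v w x y : 'rV[F]_2) (M N : 'M[F]_2).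

Definition dot g y : F := g 0 0 * y 0 0 + g 0 1 * y 0 1.
Definition det2 g h : F := g 0 0 * h 0 1 - g 0 1 * h 0 0.

Lemma row2P u v : u 0 0 = v 0 0 -> u 0 1 = v 0 1 -> u = v.
Proof.
move=> h0 h1; apply/rowP => -[[|[|//]] Hj].
- by rewrite (_ : Ordinal Hj = 0) //; apply/val_inj.
- by rewrite (_ : Ordinal Hj = 1) //; apply/val_inj.
Qed.

Lemma row2_neq0 g : g != 0 -> g 0 0 != 0 \/ g 0 1 != 0.
Proof.
move=> gn0; case: (eqVneq (g 0 0) 0) => h0; last by left.
case: (eqVneq (g 0 1) 0) => h1; last by right.
by move: gn0; rewrite (@row2P g 0) ?mxE ?eqxx.
Qed.

Lemma dotBr g y y' : dot g (y - y') = dot g y - dot g y'.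
Proof. by rewrite /dot !mxE !mulrBr opprD addrACA. Qed.

Lemma dotBl g g' y : dot (g - g') y = dot g y - dot g' y.
Proof. by rewrite /dot !mxE !mulrBl opprD addrACA. Qed.

Lemma mulmx_row2E m n (u : 'M[F]_(m, 2)) (N : 'M[F]_(2, n)) i j :
  (u *m N) i j = u i 0 * N 0 j + u i 1 * N 1 j.
Proof.
rewrite mxE !big_ord_recl big_ord0 addr0.
by rewrite (_ : lift ord0 ord0 = 1) //; apply: val_inj.
Qed.

Lemma bilformE M x y : bilform M x y = dot (x *m M) y.
Proof. by rewrite /bilform /dot mulmx_row2E !mxE. Qed.

Lemma bilform_trE M x y : bilform M x y = dot (y *m M^T) x.
Proof. by rewrite /bilform /dot !mulmx_row2E !mxE; ring. Qed.

Lemma det2_neq0l g h : det2 g h != 0 -> g != 0.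
Proof. by apply: contra => /eqP ->; rewrite /det2 !mxE !mul0r subrr. Qed.

Lemma det2_neq0r g h : det2 g h != 0 -> h != 0.
Proof. by apply: contra => /eqP ->; rewrite /det2 !mxE !mulr0 subrr. Qed.

Lemma det2_dot_eq0 g h w :
  det2 g h != 0 -> dot g w = 0 -> dot h w = 0 -> w = 0.
Proof.
rewrite /det2 /dot => hd hg hh.
have e0 : (g 0 0 * h 0 1 - g 0 1 * h 0 0) * w 0 0
    = h 0 1 * (g 0 0 * w 0 0 + g 0 1 * w 0 1)
      - g 0 1 * (h 0 0 * w 0 0 + h 0 1 * w 0 1) by ring.
have e1 : (g 0 0 * h 0 1 - g 0 1 * h 0 0) * w 0 1
    = g 0 0 * (h 0 0 * w 0 0 + h 0 1 * w 0 1)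
      - h 0 0 * (g 0 0 * w 0 0 + g 0 1 * w 0 1) by ring.
rewrite hg hh !mulr0 subrr in e0 e1.
apply: row2P; rewrite mxE; apply/eqP.
  by move/eqP: e0; rewrite mulf_eq0 (negbTE hd).
by move/eqP: e1; rewrite mulf_eq0 (negbTE hd).
Qed.

Lemma det2_eq0_dot g h y :
  det2 g h = 0 -> h != 0 -> dot h y = 0 -> dot g y = 0.
Proof.
rewrite /det2 /dot => /eqP; rewrite subr_eq0 => /eqP hd hn hy.
case/row2_neq0: hn => hn; apply: (mulfI hn); rewrite mulr0.
- rewrite -[RHS](mulr0 (g 0 0)) -hy !mulrDr !mulrA.
  by rewrite (mulrC (h 0 0) (g 0 0)) (mulrC (h 0 0) (g 0 1)) hd.
- rewrite -[RHS](mulr0 (g 0 1)) -hy !mulrDr !mulrA.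
  by rewrite (mulrC (h 0 1) (g 0 0)) (mulrC (h 0 1) (g 0 1)) -hd.
Qed.

(* det2 p (y N) is a linear form in y, namely dot (perp p N) y. *)
Definition perp (p : 'rV[F]_2) N : 'rV[F]_2 :=
  \row_i (p 0 0 * N i 1 - p 0 1 * N i 0).

Lemma det2_perp p y N : det2 p (y *m N) = dot (perp p N) y.
Proof. by rewrite /det2 /dot /perp !mulmx_row2E !mxE; ring. Qed.

Lemma perp_neq0 p N : N \in unitmx -> p != 0 -> perp p N != 0.
Proof.
move=> Nu pn0; apply/eqP => h0.
pose v : 'rV[F]_2 := \row_j (if j == 0 then - p 0 1 else p 0 0).
have perpE : perp p N = v *m N^T.
  by apply: row2P; rewrite mulmx_row2E !mxE /= ?mulNr addrC.
have v0 : v = 0.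
  by rewrite -(mulmxK (_ : N^T \in unitmx) v) ?unitmx_tr // -perpE h0 mul0mx.
move/rowP: v0 => v0; move: pn0; rewrite (@row2P p 0) ?eqxx //.
  by move: (v0 1); rewrite !mxE.
by move: (v0 0); rewrite !mxE /= => /eqP; rewrite oppr_eq0 => /eqP.
Qed.

Lemma mulmx_neq0 x N : N \in unitmx -> x != 0 -> x *m N != 0.
Proof. by move=> Nu; apply: contra => /eqP h; rewrite -(mulmxK Nu x) h mul0mx. Qed.

End Plane.

Section FinitePlane.
Variable F : finFieldType.
Implicit Types (g h x y : 'rV[F]_2) (M N : 'M[F]_2) (Y : {set 'rV[F]_2}).

Lemma card_line g t : g != 0 -> (#|[set y | dot g y == t]| <= #|F|)%N.
Proof.
move=> /row2_neq0 [] hg.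
- apply: (@leq_card_in _ _ (fun y : 'rV[F]_2 => y 0 1)) => x y.
  rewrite !inE /dot => /eqP hx /eqP hy e.
  apply: row2P => //; apply: (mulfI hg); apply: (addIr (g 0 1 * x 0 1)).
  by rewrite hx e hy.
- apply: (@leq_card_in _ _ (fun y : 'rV[F]_2 => y 0 0)) => x y.
  rewrite !inE /dot => /eqP hx /eqP hy e.
  apply: row2P => //; apply: (mulfI hg); apply: (addrI (g 0 0 * x 0 0)).
  by rewrite hx e hy.
Qed.

(* An affine line {<g, y> = t}, t != 0, meets a line {<h, y> = 0} through
   the origin in at most one point: the two are parallel or independent. *)
Lemma card_line_meet_le1 g h t : t != 0 -> h != 0 ->
  (#|[set y | (dot g y == t) && (dot h y == 0%R)]| <= 1)%N.
Proof.
move=> tn0 hn0; apply: (@leq_trans #|{: unit}|); last by rewrite card_unit.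
apply: (@leq_card_in _ _ (fun _ => tt)) => y y'.
rewrite !inE => /andP[/eqP gy /eqP hy] /andP[/eqP gy' /eqP hy'] _.
have [hd|hd] := eqVneq (det2 g h) 0.
  by move: tn0; rewrite -gy (det2_eq0_dot hd hn0 hy) eqxx.
apply/eqP; rewrite -subr_eq0; apply/eqP; apply: (det2_dot_eq0 hd).
  by rewrite dotBr gy gy' subrr.
by rewrite dotBr hy hy' subrr.
Qed.

(* For y != y', the x with B(x, y) = B(x, y') form a line through 0. *)
Lemma card_bilform_collisions M y y' : M \in unitmx -> y != y' ->
  (#|[set x | bilform M x y == bilform M x y']| <= #|F|)%N.
Proof.
move=> Mu ne.
have -> : [set x | bilform M x y == bilform M x y']
          = [set x | dot ((y - y') *m M^T) x == 0%R].
  by apply/setP => x; rewrite !inE !bilform_trE mulmxBl dotBl subr_eq0.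
by apply/card_line/mulmx_neq0; rewrite ?unitmx_tr ?subr_eq0.
Qed.

Lemma bilform_degenerate_fiber_le1 M N x Y t : N \in unitmx -> t != 0 ->
  (forall y, y \in Y -> bilform M x y = t -> det2 (x *m M) (y *m N) = 0) ->
  (#|[set y in Y | bilform M x y == t]| <= 1)%N.
Proof.
move=> Nu tn0 hdeg.
have [xM0|xMn0] := eqVneq (x *m M) 0.
  rewrite leqW // leqn0 cards_eq0; apply/eqP/setP => y.
  by rewrite !inE bilformE xM0 /dot !mxE !mul0r addr0 eq_sym (negbTE tn0) andbF.
apply: leq_trans (card_line_meet_le1 (x *m M) tn0 (perp_neq0 Nu xMn0)).
apply/subset_leq_card/subsetP => y; rewrite !inE => /andP[yY /eqP e].
by rewrite -bilformE e eqxx -det2_perp hdeg ?eqxx.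
Qed.

End FinitePlane.

Section Energy.
Variable R : realFieldType.

Lemma cauchy_schwarz (I : finType) (A : {pred I}) (f : I -> R) :
  (\sum_(i in A) f i) ^+ 2 <= #|A|%:R * \sum_(i in A) f i ^+ 2.
Proof.
set S := \sum_(i in A) f i; set Q := \sum_(i in A) f i ^+ 2.
have inner i : \sum_(j in A) (f i - f j) ^+ 2
               = #|A|%:R * f i ^+ 2 - (f i * S) *+ 2 + Q.
  rewrite (eq_bigr _ (fun j _ => sqrrB (f i) (f j))) !big_split /= sumr_const.
  by rewrite sumrN sumrMnl -mulr_sumr mulr_natl.
have h : 0 <= \sum_(i in A) \sum_(j in A) (f i - f j) ^+ 2.
  by apply: sumr_ge0 => i _; apply: sumr_ge0 => j _; apply: sqr_ge0.
rewrite (eq_bigr _ (fun i _ => inner i)) !big_split /= in h.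
rewrite sumrN sumrMnl -mulr_suml -mulr_sumr sumr_const -expr2 -/S -/Q in h.
rewrite !mulr_natl in h.
rewrite -subr_ge0 -(pmulrn_lge0 _ (isT : (0 < 2)%N)).
by rewrite mulrnBl mulr2n !mulr_natl addrAC.
Qed.

Lemma sum_indicator (S : finType) (a : S) : \sum_t ((a == t)%:R : R) = 1.
Proof.
rewrite (bigD1 a) //= eqxx big1 ?addr0 // => t /negbTE.
by rewrite eq_sym => ->.
Qed.

Lemma sum_indicatorM (S : finType) (a b : S) :
  \sum_t ((a == t)%:R * (b == t)%:R : R) = (a == b)%:R.
Proof.
rewrite (bigD1 a) //= eqxx mul1r big1 ?addr0; first by rewrite eq_sym.
by move=> t /negbTE; rewrite eq_sym => ->; rewrite mul0r.
Qed.

Lemma sum_indicator_card (T : finType) (p : pred T) :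
  \sum_x ((p x)%:R : R) = #|[set x | p x]|%:R.
Proof.
rewrite -sum1_card natr_sum [RHS]big_mkcond /=.
by apply: eq_bigr => x _; rewrite inE; case: (p x).
Qed.

Lemma fiber_second_moment (U S : finType) (w : U -> S) (Y : {set U}) :
  let n t := \sum_(y in Y) ((w y == t)%:R : R) in
  \sum_t (#|S|%:R * n t - #|Y|%:R) ^+ 2
  = #|S|%:R ^+ 2 * \sum_(y in Y) \sum_(y' in Y) ((w y == w y')%:R : R)
    - #|S|%:R * #|Y|%:R ^+ 2.
Proof.
move=> n; set Q : R := #|S|%:R; set l : R := #|Y|%:R.
have n_sum : \sum_t n t = l.
  rewrite /n exchange_big /= (eq_bigr (fun _ => 1)) ?sumr_const //.
  by move=> y _; apply: sum_indicator.
have n_sqr : \sum_t n t ^+ 2 = \sum_(y in Y) \sum_(y' in Y) ((w y == w y')%:R : R).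
  under eq_bigr => t _ do rewrite expr2 mulr_suml; rewrite exchange_big /=.
  apply: eq_bigr => y _; under eq_bigr => t _ do rewrite mulr_sumr.
  by rewrite exchange_big /=; apply: eq_bigr => y' _; rewrite sum_indicatorM.
rewrite (eq_bigr _ (fun t _ => sqrrB _ _)) !big_split /= sumr_const sumrN.
rewrite (eq_bigr _ (fun t _ => exprMn _ _ _)) -mulr_sumr n_sqr.
rewrite sumrMnl -mulr_suml -mulr_sumr n_sum -mulrA -expr2 -[l ^+ 2 *+ _]mulr_natl.
by rewrite mulr2n opprD addrA subrK.
Qed.

Lemma collision_count_le (T U S : finType) (v : T -> U -> S) (Y : {set U})
    (K : nat) :
  (forall y y', y != y' -> #|[set x | v x y == v x y']| <= K)%N ->
  \sum_x \sum_(y in Y) \sum_(y' in Y) ((v x y == v x y')%:R : R)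
  <= #|Y|%:R * #|T|%:R + #|Y|%:R ^+ 2 * K%:R.
Proof.
move=> hK; set P : R := #|T|%:R; set l : R := #|Y|%:R.
rewrite exchange_big /=.
under eq_bigr => y _ do rewrite exchange_big /=.
under eq_bigr => y _ do under eq_bigr => y' _ do rewrite sum_indicator_card.
apply: (@le_trans _ _ (\sum_(y in Y) \sum_(y' in Y) ((y == y')%:R * P + K%:R))).
  apply: ler_sum => y _; apply: ler_sum => y' _.
  have [<-|ne] := eqVneq y y'; last by rewrite mul0r add0r ler_nat hK.
  rewrite mul1r -[X in X <= _]addr0 lerD ?ler0n // ler_nat.
  by rewrite /P -cardsT subset_leq_card // subsetT.
rewrite (eq_bigr (fun _ => P + l * K%:R)).
  by rewrite sumr_const -[_ *+ #|Y|]mulr_natl -/l mulrDr mulrA -expr2.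
move=> y yY; rewrite big_split /= sumr_const -mulr_suml -/l mulr_natl.
rewrite (bigD1 y) //= eqxx big1 ?addr0 ?mul1r // => y' /andP[_ ne].
by rewrite eq_sym (negbTE ne).
Qed.

Definition value_count (T U S : finType) (v : T -> U -> S)
    (X : {set T}) (Y : {set U}) (t : S) : R :=
  \sum_(x in X) \sum_(y in Y) (v x y == t)%:R.

(* Variance of nu: Cauchy-Schwarz over x, then the two lemmas above. *)
Lemma value_variance (T U S : finType) (v : T -> U -> S)
    (X : {set T}) (Y : {set U}) (K : nat) :
  (forall y y', y != y' -> #|[set x | v x y == v x y']| <= K)%N ->
  \sum_t (#|S|%:R * value_count v X Y t - #|X|%:R * #|Y|%:R) ^+ 2
  <= #|X|%:R * (#|S|%:R ^+ 2 * (#|Y|%:R * #|T|%:R + #|Y|%:R ^+ 2 * K%:R)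
                - #|T|%:R * #|S|%:R * #|Y|%:R ^+ 2).
Proof.
move=> hK; set nu := value_count v X Y.
set Q : R := #|S|%:R; set P : R := #|T|%:R; set k : R := #|X|%:R.
set l : R := #|Y|%:R; set n := fun x t => \sum_(y in Y) ((v x y == t)%:R : R).
have nuE t : Q * nu t - k * l = \sum_(x in X) (Q * n x t - l).
  by rewrite big_split /= sumrN sumr_const mulr_sumr -mulr_natl.
under eq_bigr => t _ do rewrite nuE.
apply: (@le_trans _ _ (\sum_t k * \sum_x (Q * n x t - l) ^+ 2)).
  apply: ler_sum => t _; apply: le_trans (cauchy_schwarz _ _) _.
  rewrite -/k ler_wpM2l ?ler0n // [X in _ <= X](bigID (mem X)) /= lerDl.
  by apply: sumr_ge0 => x _; apply: sqr_ge0.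
rewrite -mulr_sumr ler_wpM2l ?ler0n // exchange_big /=.
under eq_bigr => x _ do rewrite fiber_second_moment.
rewrite big_split /= sumrN sumr_const -mulr_sumr -/P -mulr_natl mulrA lerB //.
  by rewrite mulr1 ler_wpM2l ?exprn_ge0 ?ler0n // collision_count_le.
by rewrite -mulr_natl le_eqVlt; apply/orP; left; apply/eqP; rewrite /P /l /Q; ring.
Qed.

End Energy.

Section NondegenerateValues.
Variables (F : finFieldType) (M N : 'M[F]_2) (X Y : {set 'rV[F]_2}).
Hypotheses (Mu : M \in unitmx) (Nu : N \in unitmx).

Definition nondeg_values : {set F} :=
  [set t | (t != 0) && [exists x in X, exists y in Y,
     (det2 (x *m M) (y *m N) != 0) && (bilform M x y == t)]].

Let nu : F -> rat := value_count rat (bilform M) X Y.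
Let q : rat := #|F|%:R.
Let k : rat := #|X|%:R.
Let l : rat := #|Y|%:R.

(* Instance of the variance bound: pairs collide on a line, so K = q. *)
Lemma bilform_variance :
  \sum_t (q * nu t - k * l) ^+ 2 <= k * (q ^+ 2 * (l * q ^+ 2)).
Proof.
have := value_variance rat X Y (fun y y' => @card_bilform_collisions F M y y' Mu).
rewrite card_mx mul1n natrX -/q -/k -/l; move/le_trans; apply.
lra.
Qed.

(* A degenerate non-zero value is attained at most once per x in X. *)
Lemma degenerate_value_count t :
  t != 0 -> t \notin nondeg_values -> nu t <= k.
Proof.
move=> tn0 tG; rewrite /nu /value_count /k -sum1_card natr_sum.
apply: ler_sum => x xX.
have -> : \sum_(y in Y) ((bilform M x y == t)%:R : rat)
          = #|[set y in Y | bilform M x y == t]|%:R.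
  rewrite -sum1_card natr_sum big_mkcond [RHS]big_mkcond /=.
  by apply: eq_bigr => y _; rewrite !inE; case: (y \in Y); case: (_ == _).
rewrite -[1 : rat]/(1%:R) ler_nat; apply: (bilform_degenerate_fiber_le1 Nu tn0) => y yY e.
apply/eqP; apply: contraR tG => hd; rewrite inE tn0 /=.
by apply/existsP; exists x; rewrite xX /=; apply/existsP; exists y; rewrite yY hd e eqxx.
Qed.

(* Each degenerate value t != 0 has nu(t) <= |X| <= |X||Y|/(2q), hence
   contributes at least (|X||Y|)^2 / 4 to the variance. *)
Lemma card_degenerate_values : (2 * #|F| <= #|Y|)%N ->
  (#|[set t | (t != 0%R) && (t \notin nondeg_values)]| * (#|X| * #|Y|)
   <= 4 * #|F| ^ 4)%N.
Proof.
move=> hlq; set D := [set t | _ && _].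
have{hlq} hlq : 2 * q <= l by rewrite /q /l -natrM ler_nat.
have far t : t \in D -> (k * l) ^+ 2 <= 4 * (q * nu t - k * l) ^+ 2.
  rewrite inE => /andP[tn0 tG]; have nuk := degenerate_value_count tn0 tG.
  have kl_le : k * l <= 2 * (k * l - q * nu t).
    rewrite mulrBr lerBrDr [2 * (k * l)]mulrDl mul1r lerD2l.
    apply: (@le_trans _ _ (2 * q * k)).
      by rewrite mulrA ler_wpM2l // mulr_ge0 ?ler0n.
    by rewrite mulrC ler_wpM2l ?ler0n.
  have kl0 : 0 <= k * l by rewrite mulr_ge0 ?ler0n.
  rewrite -[(q * nu t - k * l) ^+ 2]sqrrN opprB (_ : 4 = 2 ^+ 2) -?exprMn ?ler_sqr //.
  by rewrite nnegrE (le_trans kl0 kl_le).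
have hD : #|D|%:R * (k * l) ^+ 2 <= 4 * (k * (q ^+ 2 * (l * q ^+ 2))).
  apply: (@le_trans _ _ (\sum_(t in D) 4 * (q * nu t - k * l) ^+ 2)).
    by rewrite mulr_natl -sumr_const; apply: ler_sum => t /far.
  rewrite -mulr_sumr ler_wpM2l ?ler0n //; apply: le_trans bilform_variance.
  rewrite [X in _ <= X](bigID (mem D)) /= lerDl.
  by apply: sumr_ge0 => t _; apply: sqr_ge0.
have [kl0|kl_pos] := posnP (#|X| * #|Y|); first by rewrite kl0 muln0.
rewrite -(ler_nat rat) !natrM -/k -/l -/q.
rewrite -(@ler_pM2r _ (k * l)) -?natrM ?ltr0n //.
rewrite natrM -/k -/l; move: hD; lra.
Qed.

(* Hence, for |X||Y| >= 16 q^3, at most q/4 non-zero values are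
   degenerate, and at least half of all values are non-degenerate. *)
Lemma card_nondeg_values : (2 * #|F| <= #|Y|)%N ->
  (16 * #|F| ^ 3 <= #|X| * #|Y|)%N -> (4 <= #|F|)%N ->
  (#|F| <= 2 * #|nondeg_values|)%N.
Proof.
move=> hY hXY hq; have hD := card_degenerate_values hY.
set D := [set t | _ && _] in hD.
have few_degenerate : (4 * #|D| <= #|F|)%N.
  have hq3 : (0 < #|F| ^ 3)%N by rewrite expn_gt0 (leq_trans _ hq).
  have := leq_mul (leqnn #|D|) hXY; nia.
have cover : (#|F| <= #|nondeg_values| + #|D| + 1)%N.
  rewrite -(cardsC nondeg_values) -addnA leq_add2l -(cards1 (0 : F)).
  apply: leq_trans (leq_card_setU D [set 0]); apply/subset_leq_card/subsetP => t; rewrite !inE.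
  by rewrite orbC; case: (t == 0); rewrite //= orbF; case: (_ && _).
lia.
Qed.

End NondegenerateValues.

Lemma card_injective_family (I Z W : finType) (G : {set I}) (D : I -> {set Z})
    (f : I -> Z -> W) (T : {set W}) (m : nat) :
  (forall i, i \in G -> m <= #|D i|)%N ->
  (forall i z, i \in G -> z \in D i -> f i z \in T) ->
  (forall i i' z z', i \in G -> i' \in G -> z \in D i -> z' \in D i' ->
     f i z = f i' z' -> (i, z) = (i', z')) ->
  (#|G| * m <= #|T|)%N.
Proof.
move=> hm hT hinj.
pose P := [set p : I * Z | (p.1 \in G) && (p.2 \in D p.1)].
have cardPE : #|P| = (\sum_i \sum_z ((i \in G) && (z \in D i) : nat))%N.
  rewrite -sum1_card pair_big /= big_mkcond /=; apply: eq_bigr => p _.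
  by rewrite inE; case: (_ && _).
have cardP : (#|G| * m <= #|P|)%N.
  rewrite cardPE -sum_nat_const big_mkcond /=; apply: leq_sum => i _.
  case: ifP => iG //=; apply: leq_trans (hm i iG) _.
  rewrite -sum1_card big_mkcond /=.
  by apply/eq_leq/eq_bigr => z _; case: (z \in D i).
apply: leq_trans cardP _.
rewrite -(@card_in_imset _ _ (fun p => f p.1 p.2) P).
  apply/subset_leq_card/subsetP => w /imsetP [p]; rewrite inE => /andP[p1 p2] ->.
  exact: hT.
move=> [i z] [i' z']; rewrite !inE /= => /andP[iG zD] /andP[iG' zD'].
exact: hinj.
Qed.

Lemma card_triples_from_values (F : finFieldType) (G : {set F})
    (g h : F -> 'rV[F]_2) (Z : {set 'rV[F]_2})
    (pack : F -> F -> F -> F * F * F) (T : {set F * F * F}) :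
  (forall t, t \in G -> det2 (g t) (h t) != 0) ->
  (forall t u v t' u' v', pack t u v = pack t' u' v' ->
     [/\ t = t', u = u' & v = v']) ->
  (forall t z, t \in G -> z \in Z -> dot (g t) z != 0 -> dot (h t) z != 0 ->
     pack t (dot (g t) z) (dot (h t) z) \in T) ->
  (#|G| * (#|Z| - 2 * #|F|) <= #|T|)%N.
Proof.
move=> hd pack_inj hT.
pose D t := [set z in Z | (dot (g t) z != 0) && (dot (h t) z != 0)].
apply: (@card_injective_family _ _ _ G D
          (fun t z => pack t (dot (g t) z) (dot (h t) z))).
- move=> t tG; rewrite leq_subLR.
  have cover : Z \subset D t :|: ([set z | dot (g t) z == 0]
                                  :|: [set z | dot (h t) z == 0]).
    apply/subsetP => z zZ; rewrite !inE zZ /=.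
    by case: (dot (g t) z == 0); case: (dot (h t) z == 0).
  apply: leq_trans (subset_leq_card cover) _.
  apply: leq_trans (leq_card_setU _ _) _; rewrite addnC leq_add2r mul2n -addnn.
  apply: leq_trans (leq_card_setU _ _) _.
  by apply: leq_add; apply: card_line; [apply: det2_neq0l | apply: det2_neq0r];
    apply: hd tG.
- by move=> t z tG; rewrite inE => /andP[zZ /andP[hg hh]]; apply: hT.
- move=> t t' z z' tG _ _ _ /pack_inj [<- eg eh]; congr (_, _).
  apply/eqP; rewrite -subr_eq0; apply/eqP; apply: (det2_dot_eq0 (hd t tG)).
    by rewrite dotBr eg subrr.
  by rewrite dotBr eh subrr.
Qed.

Section SolvableTriples.
Variables (F : finFieldType) (M : 'M[F]_2) (A B C : {set 'rV[F]_2}).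
Hypothesis Mu : M \in unitmx.

Definition nondeg_witness (N : 'M[F]_2) (X Y : {set 'rV[F]_2}) (t : F) :=
  odflt (0, 0) [pick xy : 'rV[F]_2 * 'rV[F]_2 | (xy.1 \in X) && (xy.2 \in Y) &&
     (det2 (xy.1 *m M) (xy.2 *m N) != 0) && (bilform M xy.1 xy.2 == t)].

Lemma nondeg_witnessP N X Y t : t \in nondeg_values M N X Y ->
  let: (x, y) := nondeg_witness N X Y t in
  [/\ t != 0, x \in X, y \in Y, det2 (x *m M) (y *m N) != 0 &
      bilform M x y = t].
Proof.
rewrite inE => /andP[tn0 /existsP[x /andP[xX /existsP[y /andP[yY /andP[hd he]]]]]].
rewrite /nondeg_witness; case: pickP => [[a b] /= /andP[/andP[/andP[aX bY] hd'] /eqP eab]|none].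
  by split.
by move: (none (x, y)); rewrite /= xX yY hd he.
Qed.

Let T := solvable_triples M A B C.

Lemma card_triples_by_ab :
  (#|nondeg_values M M A B| * (#|C| - 2 * #|F|) <= #|T|)%N.
Proof.
pose g t := (nondeg_witness M A B t).1 *m M.
pose h t := (nondeg_witness M A B t).2 *m M.
apply: (@card_triples_from_values _ _ g h C (fun t u v => (t, u, v))).
- move=> t /nondeg_witnessP; rewrite /g /h.
  by case: nondeg_witness => a b [].
- by move=> t u v t' u' v' [-> -> ->].
- move=> t c /nondeg_witnessP; rewrite /g /h.
  case: nondeg_witness => a b [tn0 aA bB _ eab] cC hac hbc.
  rewrite inE /= tn0 hac hbc; apply/existsP; exists a; rewrite aA /=.
  apply/existsP; exists b; rewrite bB /=; apply/existsP; exists c.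
  by rewrite cC eab !bilformE !eqxx.
Qed.

(* Extend each non-degenerate value t = B(a, c) by b in B; here B(b, c) is
   read as the linear form <c M^T, .> in b. *)
Lemma card_triples_by_ac :
  (#|nondeg_values M M^T A C| * (#|B| - 2 * #|F|) <= #|T|)%N.
Proof.
pose g t := (nondeg_witness M^T A C t).1 *m M.
pose h t := (nondeg_witness M^T A C t).2 *m M^T.
apply: (@card_triples_from_values _ _ g h B (fun t u v => (u, t, v))).
- move=> t /nondeg_witnessP; rewrite /g /h.
  by case: nondeg_witness => a c [].
- by move=> t u v t' u' v' [-> -> ->].
- move=> t b /nondeg_witnessP; rewrite /g /h.
  case: nondeg_witness => a c [tn0 aA cC _ eac] bB hab hcb.
  rewrite inE /= tn0 hab hcb; apply/existsP; exists a; rewrite aA /=.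
  apply/existsP; exists b; rewrite bB /=; apply/existsP; exists c.
  by rewrite cC eac bilformE [bilform M b c]bilform_trE !eqxx.
Qed.

Lemma extension_bound (t m q z : nat) :
  (m * (z - 2 * q) <= t)%N -> (q <= 2 * m)%N -> (4 * q <= z)%N ->
  (q * z <= 4 * t)%N.
Proof. move=> hmt hqm hz; have := leq_mul hqm (leqnn (z - 2 * q)); nia. Qed.

Lemma solvable_triples_lower_bound :
  (4 <= #|F|)%N -> (4 * #|F| <= #|B|)%N -> (4 * #|F| <= #|C|)%N ->
  (16 * #|F| ^ 3 <= #|A| * #|B|)%N -> (16 * #|F| ^ 3 <= #|A| * #|C|)%N ->
  (#|F| * #|B| <= 4 * #|T|)%N /\ (#|F| * #|C| <= 4 * #|T|)%N.
Proof.
move=> hq hB hC hAB hAC.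
have half (X : {set 'rV[F]_2}) : (4 * #|F| <= #|X|)%N -> (2 * #|F| <= #|X|)%N.
  by move/(leq_trans _); apply; rewrite leq_mul2r orbT.
have MTu : M^T \in unitmx by rewrite unitmx_tr.
split.
- apply: (extension_bound card_triples_by_ac) hB.
  exact: (card_nondeg_values Mu MTu (half C hC)).
- apply: (extension_bound card_triples_by_ab) hC.
  exact: (card_nondeg_values Mu Mu (half B hB)).
Qed.

End SolvableTriples.

Lemma large_card_ge (q n : nat) :
  4 * (q%:R * sqrtC q%:R) <= n%:R :> algC -> (4 * q <= n)%N.
Proof.
have [->|q_gt0] := posnP q; first by rewrite muln0.
have s1 : 1 <= sqrtC q%:R :> algC.
  by rewrite -{1}sqrtC1 ler_sqrtC ?nnegrE ?ler01 ?ler0n // ler1n.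
move=> hn; rewrite -(ler_nat algC) natrM; apply: le_trans hn.
by rewrite ler_wpM2l // ler_peMr ?ler0n.
Qed.

Lemma large_card_prod_ge (q m n : nat) :
  4 * (q%:R * sqrtC q%:R) <= m%:R :> algC ->
  4 * (q%:R * sqrtC q%:R) <= n%:R :> algC ->
  (16 * q ^ 3 <= m * n)%N.
Proof.
move=> hm hn; rewrite -(ler_nat algC) natrM natrX natrM.
set s : algC := sqrtC q%:R.
have s2 : s ^+ 2 = q%:R by rewrite sqrtCK.
have s0 : 0 <= 4 * (q%:R * s) by rewrite !mulr_ge0 ?ler0n ?sqrtC_ge0.
apply: le_trans (ler_pM s0 s0 hm hn).
rewrite le_eqVlt; apply/orP; left; apply/eqP.
by rewrite -s2; ring.
Qed.

Lemma sqrt_product_bound (q b c t : nat) : (0 < q)%N ->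
  (q * b <= 4 * t)%N -> (q * c <= 4 * t)%N ->
  1 / 4 * (sqrtC (b * c)%:R / q%:R ^+ 2) * q%:R ^+ 3 <= t%:R :> algC.
Proof.
move=> q_gt0 hb hc.
have q0 : q%:R != 0 :> algC by rewrite pnatr_eq0 -lt0n.
have -> : 1 / 4 * (sqrtC (b * c)%:R / q%:R ^+ 2) * q%:R ^+ 3
          = sqrtC ((q * b * (q * c))%:R) / 4 :> algC.
  have -> : sqrtC ((q * b * (q * c))%:R) = q%:R * sqrtC (b * c)%:R :> algC.
    rewrite (_ : q * b * (q * c) = q ^ 2 * (b * c))%N; last by ring.
    by rewrite [in LHS]natrM sqrtCM ?nnegrE ?ler0n // natrX sqrCK ?ler0n.
  by field; rewrite q0.
have t4 : 0 <= (4 * t)%:R :> algC by rewrite ler0n.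
rewrite ler_pdivrMr ?ltr0n // mulrC -natrM -(sqrCK t4).
rewrite ler_sqrtC ?nnegrE ?exprn_ge0 ?ler0n // -natrX ler_nat expnS expn1.
exact: leq_mul.
Qed.

Theorem theorem1p3 :
  exists Cst c : algC, 0 < Cst /\ 0 < c /\
  forall (F : finFieldType) (M : 'M[F]_2) (A B C : {set 'rV[F]_2}),
    bilform_nondeg M ->
    let q : algC := (#|F|)%:R in
    Cst * (q * sqrtC q) <= (#|A|)%:R ->
    Cst * (q * sqrtC q) <= (#|B|)%:R ->
    Cst * (q * sqrtC q) <= (#|C|)%:R ->
    c * (sqrtC ((#|B| * #|C|)%:R) / q ^+ 2) * q ^+ 3
      <= (#|solvable_triples M A B C|)%:R.
Proof.
exists 4, (1 / 4); split; first by rewrite ltr0n.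
split; first by rewrite mul1r invr_gt0 ltr0n.
move=> F M A B C Mu q hA hB hC.
have q_gt0 : (0 < #|F|)%N by apply/card_gt0P; exists 0.
(* |A| <= q^2 forces q >= 4. *)
have q_ge4 : (4 <= #|F|)%N.
  have := leq_trans (large_card_ge hA) (max_card A).
  by rewrite card_mx mul1n expnS expn1 leq_pmul2r.
have [hqB hqC] := solvable_triples_lower_bound Mu q_ge4
  (large_card_ge hB) (large_card_ge hC)
  (large_card_prod_ge hA hB) (large_card_prod_ge hA hC).
exact: sqrt_product_bound.
Qed.
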